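(* Let $X$ be an FK-space containing $\phi$, and let $\overline{\phi}$ denote the closure of $\phi$ in $X$. If $Y$ is an FK-space with $\overline{\phi}\subseteq Y\subseteq X$, then $D_p^qB^+(Y)=D_p^qB^+(X)$.
   Context: An FK-space is a vector subspace of the space $w$ of all complex sequences with a complete metrizable locally convex topology in which coordinate functionals are continuous; $X'$ is its continuous dual. $\delta^j$ has $1$ in position $j$, $0$ elsewhere; $\phi=\operatorname{span}\{\delta^j\}$. $p(n)<q(n)$ are nonnegative integer sequences with $q(n)\to\infty$. For an FK-space $X\supseteq\phi$, $D_p^qB^+(X)=\{x\in w:\sup_n|\frac{1}{q(n)-p(n)}\sum_{k=p(n)+1}^{q(n)}\sum_{j=1}^kx_jf(\delta^j)|<\infty\ \forall f\in X'\}$. *)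

From HB Require Import structures.
From mathcomp Require Import all_boot all_order all_algebra.
From mathcomp Require Import reals.
From mathcomp Require Import complex.

Set Implicit Arguments.
Unset Strict Implicit.
Unset Printing Implicit Defensive.

Import Order.TTheory GRing.Theory Num.Theory.
Local Open Scope ring_scope.

(* Complex sequences (elements of w), 0-based: the paper's x_j (j >= 1)
   is x (j-1) here. *)
Section FK.
Variable R : realType.
Local Notation C := R[i].

Definition seqC := nat -> C.

Definition cabs (z : C) : R := Num.sqrt (complex.Re z ^+ 2 + complex.Im z ^+ 2).

Definition szero : seqC := fun _ => 0.
Definition sadd (x y : seqC) : seqC := fun j => x j + y j.
Definition ssub (x y : seqC) : seqC := fun j => x j - y j.
Definition sscale (a : C) (x : seqC) : seqC := fun j => a * x j.

Definition delta (j : nat) : seqC := fun i => if i == j then 1 else 0.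

(* membership in phi = span of the delta's = finitely supported sequences *)
Definition in_phi (x : seqC) : Prop := exists N, forall j, (N <= j)%N -> x j = 0.

(* (X, sn) is an FK-space: X is a linear subspace of w carrying the
   complete metrizable locally convex topology generated by the increasing
   countable family of seminorms sn (a Frechet space), Hausdorff, with
   continuous coordinate functionals. *)
Definition is_FK (X : seqC -> Prop) (sn : nat -> seqC -> R) : Prop :=
  X szero /\
      (forall x y, X x -> X y -> X (sadd x y)) /\
      (forall a x, X x -> X (sscale a x)) /\
      (forall k x, X x -> 0 <= sn k x) /\
      (forall k x y, X x -> X y -> sn k (sadd x y) <= sn k x + sn k y) /\
      (forall k a x, X x -> sn k (sscale a x) = cabs a * sn k x) /\
      (forall k x, X x -> sn k x <= sn k.+1 x) /\
      (forall x, X x -> (forall k, sn k x = 0) -> x = szero) /\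
      (forall u : nat -> seqC, (forall n, X (u n)) ->
         (forall k (e : R), 0 < e -> exists N, forall m n, (N <= m)%N -> (N <= n)%N ->
             sn k (ssub (u m) (u n)) < e) ->
         exists x, X x /\ forall k (e : R), 0 < e -> exists N, forall n, (N <= n)%N ->
             sn k (ssub (u n) x) < e) /\
      (forall j, exists k (c : R), forall x, X x -> cabs (x j) <= c * sn k x).

Definition in_dual (X : seqC -> Prop) (sn : nat -> seqC -> R) (f : seqC -> C) : Prop :=
  [/\ (forall x y, X x -> X y -> f (sadd x y) = f x + f y),
      (forall a x, X x -> f (sscale a x) = a * f x) &
      exists k (c : R), forall x, X x -> cabs (f x) <= c * sn k x].

Definition phi_closure (X : seqC -> Prop) (sn : nat -> seqC -> R) (x : seqC) : Prop :=
  X x /\ forall k (e : R), 0 < e -> exists y, in_phi y /\ sn k (ssub x y) < e.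

Definition DqpBplus (X : seqC -> Prop) (sn : nat -> seqC -> R) (p q : nat -> nat)
    (x : seqC) : Prop :=
  forall f, in_dual X sn f ->
    exists M : R, forall n,
      cabs (((q n - p n)%:R)^-1 *
            \sum_((p n).+1 <= k < (q n).+1) \sum_(0 <= j < k) x j * f (delta j)) <= M.

End FK.

(* Membership in D_p^qB^+(E) depends on a functional f in E' only through the
   numbers f(delta^j), so it suffices to match X' and Y' on the delta^j.
   Every f in X' restricts to an element of Y', because the inclusion of one
   FK-space into another is continuous: by Baire category some sublevel set of a
   seminorm of the larger space is dense in a ball of the smaller one, and
   Banach's successive approximation turns this into a bound of the former
   seminorm by one of the latter.  Conversely, the closure of phi in X is itself
   an FK-space and lies in Y, so each g in Y' is bounded on it by a seminorm of
   X; by Hahn-Banach g extends to some f in X', which agrees with g on every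
   delta^j. *)

From HB Require Import structures.
From mathcomp Require Import all_boot all_order all_algebra.
From mathcomp Require Import reals.
From mathcomp Require Import complex.
From mathcomp Require Import boolp classical_sets.
From mathcomp Require Import ring lra.
Set Implicit Arguments.
Unset Strict Implicit.
Unset Printing Implicit Defensive.
Import Order.TTheory GRing.Theory Num.Theory.
Local Open Scope ring_scope.

Lemma nat_dependent_choice (T : Type) (Q : nat -> T -> Prop) (P : nat -> T -> T -> Prop)
    (t0 : T) :
  Q 0%N t0 -> (forall n t, Q n t -> exists t', Q n.+1 t' /\ P n t t') ->
  exists u : nat -> T, u 0%N = t0 /\ forall n, Q n (u n) /\ P n (u n) (u n.+1).
Proof.
move=> Q0 step.
have /choice [f fP] : forall nt : nat * T, exists t',
    Q nt.1 nt.2 -> Q nt.1.+1 t' /\ P nt.1 nt.2 t'.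
  move=> [n t] /=.
  have [Qt|nQt] := pselect (Q n t); last by exists t.
  by have [t' ?] := step n t Qt; exists t'.
pose u := fix u n := if n is m.+1 then f (m, u m) else t0.
have Qu n : Q n (u n) by elim: n => //= n /(fP (n, _)) [].
by exists u; split => // n; split; [exact: Qu | exact: (fP (n, u n) (Qu n)).2].
Qed.

Ltac seq_ring := apply: funext => ?; unfold ssub, sadd, sscale, szero; ring.

Section Modulus.
Variable R : realType.
Local Notation C := R[i].
Local Open Scope complex_scope.

Lemma cabsE (z : C) : (cabs z)%:C = `|z|.
Proof. by rewrite normc_def. Qed.

Lemma cabs_ge0 (z : C) : 0 <= cabs z.
Proof. exact: sqrtr_ge0. Qed.

Lemma cabsD (a b : C) : cabs (a + b) <= cabs a + cabs b.
Proof. by rewrite -lecR rmorphD /= !cabsE ler_normD. Qed.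

Lemma cabsN (z : C) : cabs (- z) = cabs z.
Proof. by apply: complexI; rewrite !cabsE normrN. Qed.

Lemma cabs_real (r : R) : cabs r%:C = `|r|.
Proof. by rewrite /cabs /= expr0n /= addr0 sqrtr_sqr. Qed.

Lemma cabs0 : cabs (0 : C) = 0.
Proof. by rewrite -[0]/((0 : R)%:C) cabs_real normr0. Qed.

Lemma cabs1 : cabs (1 : C) = 1.
Proof. by rewrite -[1]/((1 : R)%:C) cabs_real normr1. Qed.

Lemma cabs_eq0 (z : C) : cabs z = 0 -> z = 0.
Proof. by move=> h; apply/eqP; rewrite -normr_eq0 -cabsE h. Qed.

Lemma cabs_le_eps (z : C) : (forall e, 0 < e -> cabs z <= e) -> z = 0.
Proof.
move=> h; apply: cabs_eq0; apply/eqP; rewrite eq_le cabs_ge0 andbT.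
by apply/ler_addgt0Pr => e /h; rewrite add0r.
Qed.

Lemma Re_le_cabs (z : C) : complex.Re z <= cabs z.
Proof.
rewrite /cabs; apply: le_trans (ler_norm _) _.
by rewrite -sqrtr_sqr ler_sqrt ?addr_ge0 ?sqr_ge0 // lerDl sqr_ge0.
Qed.

Lemma cabs_conj (z : C) : cabs z^*%C = cabs z.
Proof. by case: z => a b; rewrite /cabs /= sqrrN. Qed.

Lemma mulc_conj (z : C) : z * z^*%C = (cabs z ^+ 2)%:C.
Proof.
rewrite /cabs sqr_sqrtr ?addr_ge0 ?sqr_ge0 //.
case: z => a b /=; apply/eqP; rewrite eq_complex /=; apply/andP; split; apply/eqP.
  by rewrite mulrN opprK !expr2.
by rewrite mulrN mulrC addNr.
Qed.

End Modulus.

Section SequenceAlgebra.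
Variable R : realType.
Implicit Types (x y z : seqC R).

Lemma archi_inv (e : R) : 0 < e -> exists N, forall n, (N <= n)%N -> n.+1%:R^-1 < e.
Proof.
move=> e0; have := @archi_boundP _ e^-1; rewrite invr_ge0 ltW // => /(_ isT) h.
exists (Num.Def.archi_bound e^-1) => n hn.
rewrite -ltf_pV2 ?posrE ?invr_gt0 ?ltr0Sn // invrK.
by apply: lt_le_trans h _; rewrite ler_nat ltnW.
Qed.

Lemma halving_small (r : R) : 0 < r ->
  forall eps, 0 < eps -> exists N, forall n, (N <= n)%N -> r / 2 ^+ n < eps.
Proof.
move=> r0 eps eps0; have [N hN] := archi_inv (divr_gt0 eps0 r0).
exists N => n /hN small_n; apply: le_lt_trans (_ : r / 2 ^+ n <= r * n.+1%:R^-1) _.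
  rewrite ler_pM2l // lef_pV2 ?posrE ?exprn_gt0 ?ltr0Sn // -natrX ler_nat.
  exact: ltn_expl.
by rewrite mulrC -ltr_pdivlMr.
Qed.

Lemma ssubE x y : ssub x y = sadd x (sscale (-1) y).
Proof. by seq_ring. Qed.

Lemma ssub_trans x y z : ssub x z = sadd (ssub x y) (ssub y z).
Proof. by seq_ring. Qed.

Lemma ssubC x y : ssub y x = sscale (-1) (ssub x y).
Proof. by seq_ring. Qed.

Lemma ssubxx x : ssub x x = sscale 0 x.
Proof. by seq_ring. Qed.

End SequenceAlgebra.

(** * FK-spaces *)

Section FKSpace.
Variable R : realType.
Implicit Types (x y z : seqC R).

(* The axioms of [is_FK] without separation (never used below), with a positive
   constant in the coordinate bounds. *)
Record fk_space (E : seqC R -> Prop) (s : nat -> seqC R -> R) : Prop := FKSpace {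
  fk0 : E (szero R);
  fkD : forall x y, E x -> E y -> E (sadd x y);
  fkZ : forall a x, E x -> E (sscale a x);
  sn_ge0 : forall k x, E x -> 0 <= s k x;
  snD : forall k x y, E x -> E y -> s k (sadd x y) <= s k x + s k y;
  snZ : forall k a x, E x -> s k (sscale a x) = cabs a * s k x;
  sn_leS : forall k x, E x -> s k x <= s k.+1 x;
  fk_complete : forall u : nat -> seqC R, (forall n, E (u n)) ->
    (forall k (e : R), 0 < e -> exists N, forall m n, (N <= m)%N -> (N <= n)%N ->
       s k (ssub (u m) (u n)) < e) ->
    exists x, E x /\ forall k (e : R), 0 < e -> exists N, forall n, (N <= n)%N ->
       s k (ssub (u n) x) < e;
  fk_coord : forall j, exists k (c : R), 0 < c /\ forall x, E x -> cabs (x j) <= c * s k x }.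

Lemma is_FK_fk_space X sn : is_FK X sn -> fk_space X sn.
Proof.
move=> [h0 [hD [hZ [hge [htri [hhom [hmono [_ [hcpl hco]]]]]]]]].
split => // j; have [k [c hc]] := hco j.
exists k, (`|c| + 1); split; first by rewrite ltr_wpDl.
move=> x Xx; apply: le_trans (hc x Xx) _; apply: ler_wpM2r; first exact: hge.
by rewrite ler_wpDr // ler_norm.
Qed.

Section Seminorms.
Variables (E : seqC R -> Prop) (s : nat -> seqC R -> R) (hE : fk_space E s).

Lemma fkB x y : E x -> E y -> E (ssub x y).
Proof. by move=> Ex Ey; rewrite ssubE; apply: (fkD hE) => //; apply: (fkZ hE). Qed.

Lemma sn_subxx k x : E x -> s k (ssub x x) = 0.
Proof.
by move=> Ex; rewrite ssubxx (snZ hE) // cabs0 mul0r.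
Qed.

Lemma sn_subC k x y : E x -> E y -> s k (ssub y x) = s k (ssub x y).
Proof.
move=> Ex Ey; rewrite ssubC (snZ hE); last exact: fkB.
by rewrite cabsN cabs1 mul1r.
Qed.

Lemma sn_sub_trans k x y z : E x -> E y -> E z ->
  s k (ssub x z) <= s k (ssub x y) + s k (ssub y z).
Proof. by move=> Ex Ey Ez; rewrite (ssub_trans x y z) (snD hE) //; exact: fkB. Qed.

Lemma sn_subD k x y : E x -> E y -> s k (ssub x y) <= s k x + s k y.
Proof.
move=> Ex Ey; rewrite ssubE; apply: le_trans (snD hE _ _ _) _ => //; first exact: (fkZ hE).
by rewrite (snZ hE) // cabsN cabs1 mul1r.
Qed.

Lemma sn_le k k' x : (k <= k')%N -> E x -> s k x <= s k' x.
Proof.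
move=> /subnK <- Ex; elim: (k' - k)%N => [|n ih] //.
by apply: le_trans ih _; rewrite addSn; apply: (sn_leS hE).
Qed.

Definition converges (u : nat -> seqC R) (x : seqC R) : Prop :=
  forall k (eps : R), 0 < eps -> exists N, forall n, (N <= n)%N -> s k (ssub (u n) x) < eps.

Lemma converges_coord (u : nat -> seqC R) x : E x -> (forall n, E (u n)) ->
  converges u x -> forall j eps, 0 < eps ->
  exists N, forall n, (N <= n)%N -> cabs (u n j - x j) < eps.
Proof.
move=> Ex Eu ux j eps eps0; have [k [c [c0 hc]]] := fk_coord hE j.
have [N hN] := ux k (eps / c) (divr_gt0 eps0 c0).
exists N => n /hN snk; apply: le_lt_trans (hc _ (fkB (Eu n) Ex)) _.
by rewrite mulrC -ltr_pdivlMr.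
Qed.

Section Telescoping.
Variables (u : nat -> seqC R) (K : nat -> nat) (e : nat -> R).
Hypotheses (Eu : forall n, E (u n)) (K_mono : {homo K : m n / (m <= n)%N})
  (K_unbounded : forall k, exists n, (k <= K n)%N)
  (e_ge0 : forall n, 0 <= e n) (e_small : forall eps, 0 < eps -> exists n, e n < eps)
  (u_step : forall n, s (K n) (ssub (u n.+1) (u n)) <= e n - e n.+1).

Lemma telescoping_bound n m : s (K n) (ssub (u (n + m)) (u n)) <= e n - e (n + m).
Proof.
elim: m => [|m ih]; first by rewrite addn0 sn_subxx // subrr.
have := le_trans (sn_le (K_mono (leq_addr m n)) (fkB (Eu (n + m).+1) (Eu _)))
  (u_step (n + m)).
rewrite addnS; have := sn_sub_trans (K n) (Eu (n + m).+1) (Eu (n + m)) (Eu n); lra.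
Qed.

Lemma e_nonincreasing n m : (n <= m)%N -> e m <= e n.
Proof.
move=> /subnKC <-; have := telescoping_bound n (m - n).
by have := sn_ge0 hE (K n) (fkB (Eu (n + (m - n))) (Eu n)); lra.
Qed.

Lemma telescoping_limit :
  exists x, [/\ E x, converges u x & forall n, s (K n) (ssub x (u n)) <= e n].
Proof.
have near n m : (n <= m)%N -> s (K n) (ssub (u m) (u n)) <= e n.
  move=> /subnKC <-; have := e_ge0 (n + (m - n)); have := telescoping_bound n (m - n); lra.
have [x [Ex ux]] : exists x, E x /\ converges u x.
  apply: (fk_complete hE) => // k eps eps0.
  have [N1 kN1] := K_unbounded k.
  have [N2 eN2] := e_small (divr_gt0 eps0 (ltr0Sn _ 1)).
  pose N := maxn N1 N2; exists N => m n Nm Nn.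
  have kN : (k <= K N)%N by apply: leq_trans kN1 (K_mono (leq_maxl _ _)).
  have eN : e N < eps / 2 by apply: le_lt_trans (e_nonincreasing (leq_maxr _ _)) eN2.
  apply: le_lt_trans (sn_sub_trans _ (Eu m) (Eu N) (Eu n)) _.
  rewrite [s k (ssub (u N) (u n))]sn_subC ?Eu //.
  have := near N m Nm; have := near N n Nn.
  have := sn_le kN (fkB (Eu m) (Eu N)); have := sn_le kN (fkB (Eu n) (Eu N)); lra.
exists x; split => // n; apply/ler_addgt0Pr => eps eps0.
have [N hN] := ux (K n) eps eps0; pose m := maxn N n.
apply: le_trans (sn_sub_trans _ Ex (Eu m) (Eu n)) _.
rewrite sn_subC ?Eu //; have := hN m (leq_maxl _ _); have := near n m (leq_maxr _ _); lra.
Qed.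

End Telescoping.

End Seminorms.

Lemma converges_unique (E1 E2 : seqC R -> Prop) s1 s2 (u : nat -> seqC R) x1 x2 :
  fk_space E1 s1 -> fk_space E2 s2 -> E1 x1 -> E2 x2 ->
  (forall n, E1 (u n) /\ E2 (u n)) -> converges s1 u x1 -> converges s2 u x2 -> x1 = x2.
Proof.
move=> h1 h2 Ex1 Ex2 Eu ux1 ux2; apply: funext => j; apply/eqP; rewrite -subr_eq0; apply/eqP.
apply: cabs_le_eps => eps eps0; have eps2 : 0 < eps / 2 by rewrite divr_gt0.
have [N1 hN1] := converges_coord h1 Ex1 (fun n => (Eu n).1) ux1 j eps2.
have [N2 hN2] := converges_coord h2 Ex2 (fun n => (Eu n).2) ux2 j eps2.
pose n := maxn N1 N2.
have -> : x1 j - x2 j = - (u n j - x1 j) + (u n j - x2 j) by ring.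
apply: le_trans (cabsD _ _) _; rewrite cabsN.
by have := hN1 n (leq_maxl _ _); have := hN2 n (leq_maxr _ _); lra.
Qed.

End FKSpace.

(** * Continuity of inclusions *)

Section Baire.
Variable R : realType.
Variables (E : seqC R -> Prop) (s : nat -> seqC R -> R) (hE : fk_space E s).

Definition adherent (A : seqC R -> Prop) (y : seqC R) : Prop :=
  forall j d, 0 < d -> exists z, [/\ E z, A z & s j (ssub y z) < d].

Definition dense_in_ball (A : seqC R -> Prop) (y0 : seqC R) (k0 : nat) (e0 : R) : Prop :=
  forall y, E y -> s k0 (ssub y y0) < e0 -> adherent A y.

Lemma nowhere_dense_shrink (A : seqC R -> Prop) :
  ~ (exists y0 k0 e0, [/\ E y0, 0 < e0 & dense_in_ball A y0 k0 e0]) ->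
  forall y0 k0 e0 eps, E y0 -> 0 < e0 -> 0 < eps ->
  exists y k e, [/\ E y /\ s k0 (ssub y y0) < e0, (k0 < k)%N, 0 < e <= eps &
    forall w, E w -> s k (ssub w y) <= e -> ~ adherent A w].
Proof.
move=> nowhere y0 k0 e0 eps Ey0 e0_gt0 eps_gt0.
have [y [j [d [Ey y_near d_gt0 far]]]] : exists y j d,
    [/\ E y, s k0 (ssub y y0) < e0, 0 < d & forall z, E z -> A z -> d <= s j (ssub y z)].
  apply: contrapT => not_far; apply: nowhere; exists y0, k0, e0; split=> // y Ey y_near j d d0.
  apply: contrapT => not_adh; apply: not_far; exists y, j, d; split=> // z Ez Az.
  by rewrite leNgt; apply/negP => lt; apply: not_adh; exists z.
pose e := Num.min (d / 2) eps.
have e_gt0 : 0 < e by rewrite lt_min divr_gt0.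
exists y, (maxn j k0.+1), e; split => //; first by rewrite leq_max ltnSn orbT.
  by rewrite e_gt0 ge_min lexx orbT.
move=> w Ew w_near /(_ j (d / 2) (divr_gt0 d_gt0 (ltr0Sn _ 1))) [z [Ez Az wz]].
have yw : s j (ssub y w) <= d / 2.
  have e_le : e <= d / 2 by rewrite ge_min lexx.
  rewrite (sn_subC hE) //; apply: le_trans (le_trans w_near e_le).
  by apply: (sn_le hE); [exact: leq_maxl | exact: (fkB hE)].
have := far z Ez Az; have := sn_sub_trans hE j Ey Ew Ez; lra.
Qed.

Lemma baire (A : nat -> seqC R -> Prop) : (forall y, E y -> exists m, A m y) ->
  exists m y0 k0 e0, [/\ E y0, 0 < e0 & dense_in_ball (A m) y0 k0 e0].
Proof.
move=> cover; apply: contrapT => nowhere.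
have shrink m := nowhere_dense_shrink (A := A m) (fun h => nowhere (ex_intro _ m h)).
(* [b n] = (centre, seminorm index, radius) of the n-th ball; the closed ball
   [b n.+1] lies in [b n] and misses the closure of [A n]. *)
pose P n (b b' : seqC R * nat * R) :=
  [/\ s b.1.2 (ssub b'.1.1 b.1.1) < b.2 / 2, (b.1.2 < b'.1.2)%N,
      b'.2 <= Num.min (b.2 / 2) n.+1%:R^-1 &
      forall w, E w -> s b'.1.2 (ssub w b'.1.1) <= b'.2 -> ~ adherent (A n) w].
have step n (b : seqC R * nat * R) : E b.1.1 /\ 0 < b.2 ->
    exists b', (E b'.1.1 /\ 0 < b'.2) /\ P n b b'.
  move: b => [[y k] e] [/= Ey e_gt0].
  have e2_gt0 : 0 < e / 2 by rewrite divr_gt0.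
  have [|y' [k' [e' [[Ey' near] kk' /andP[e'_gt0 e'_le] far]]]] :=
    shrink n y k (e / 2) (Num.min (e / 2) n.+1%:R^-1) Ey e2_gt0.
    by rewrite lt_min e2_gt0 invr_gt0 ltr0Sn.
  by exists (y', k', e').
have [b [_ hb]] := nat_dependent_choice
  (Q := fun _ (b : seqC R * nat * R) => E b.1.1 /\ 0 < b.2)
  (t0 := (szero R, 0%N, 1)) (conj (fk0 hE) ltr01) step.
pose u n := (b n).1.1; pose K n := (b n).1.2; pose e n := (b n).2.
have K_lt n : (K n < K n.+1)%N by case: (hb n) => _ [].
have e_gt0 n : 0 < e n by case: (hb n) => -[].
have Eu n : E (u n) by case: (hb n) => -[].
have K_mono : {homo K : m n / (m <= n)%N}.
  by apply: homo_leq => [//|??? /leq_trans|n]; [exact | exact: ltnW].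
have K_unbounded k : exists n, (k <= K n)%N.
  by exists k; elim: k => // k ih; exact: leq_ltn_trans ih (K_lt k).
have e_small eps : 0 < eps -> exists n, e n < eps.
  move=> /archi_inv [N hN]; exists N.+1.
  by have [_ [_ _ + _]] := hb N; rewrite le_min => /andP[_ /le_lt_trans]; apply; apply: hN.
have u_step n : s (K n) (ssub (u n.+1) (u n)) <= e n - e n.+1.
  have [_ [near _ + _]] := hb n; rewrite le_min => /andP[+ _].
  by have := e_gt0 n; rewrite /u /K /e; lra.
have [x [Ex _ xu]] := telescoping_limit hE Eu K_mono K_unbounded (fun n => ltW (e_gt0 n))
  e_small u_step.
have [m Am] := cover x Ex.
have [_ [_ _ _ far]] := hb m.
by apply: (far x Ex (xu m.+1)) => j d d0; exists x; rewrite (sn_subxx hE).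
Qed.

End Baire.

Section Inclusion.
Variable R : realType.
Local Open Scope complex_scope.
Variables (E F : seqC R -> Prop) (sE sF : nat -> seqC R -> R).
Hypotheses (hE : fk_space E sE) (hF : fk_space F sF) (EF : forall x, E x -> F x).

Local Notation approx k c := (adherent E sE (fun z => sF k z <= c)).

Lemma approx_le k c c' y : c <= c' -> approx k c y -> approx k c' y.
Proof.
move=> cc' yc j d /(yc j) [z [Ez zc yz]]; exists z; split => //; exact: le_trans zc cc'.
Qed.

Lemma approxZ k c a y : E y -> approx k c y -> approx k (cabs a * c) (sscale a y).
Proof.
move=> Ey yc j d d0; have a0 := cabs_ge0 a; have a1 : 0 < cabs a + 1 by rewrite ltr_wpDl.
have [z [Ez zc yz]] := yc j (d / (cabs a + 1)) (divr_gt0 d0 a1).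
exists (sscale a z); split; first exact: (fkZ hE).
  by rewrite (snZ hF); [exact: ler_wpM2l | exact: EF].
have -> : ssub (sscale a y) (sscale a z) = sscale a (ssub y z) by seq_ring.
rewrite (snZ hE); last exact: (fkB hE).
apply: le_lt_trans (_ : _ <= cabs a * (d / (cabs a + 1))) _; first exact/ler_wpM2l/ltW.
by rewrite mulrA ltr_pdivrMr // mulrDr mulr1 mulrC ltrDl.
Qed.

Lemma approxB k c1 c2 y1 y2 : E y1 -> E y2 -> approx k c1 y1 -> approx k c2 y2 ->
  approx k (c1 + c2) (ssub y1 y2).
Proof.
move=> Ey1 Ey2 yc1 yc2 j d d0; have d2 : 0 < d / 2 by rewrite divr_gt0.
have [z1 [Ez1 zc1 yz1]] := yc1 j _ d2; have [z2 [Ez2 zc2 yz2]] := yc2 j _ d2.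
exists (ssub z1 z2); split; first exact: (fkB hE).
  by apply: le_trans (sn_subD hF k (EF Ez1) (EF Ez2)) _; exact: lerD.
have -> : ssub (ssub y1 y2) (ssub z1 z2) = ssub (ssub y1 z1) (ssub y2 z2) by seq_ring.
by apply: le_lt_trans (sn_subD hE j (fkB hE Ey1 Ez1) (fkB hE Ey2 Ez2)) _; lra.
Qed.

Lemma approx_of_small_sE k : exists k0 (delta : R), [/\ (k <= k0)%N, 0 < delta <= 1 &
  forall r y, 0 < r -> E y -> sE k0 y < delta * r -> approx k r y].
Proof.
have cover y : E y -> exists m : nat, sF k y <= m%:R.
  move=> Ey; exists (Num.Def.archi_bound (sF k y)).
  exact/ltW/archi_boundP/(sn_ge0 hF)/EF.
have [m [y0 [k0 [e0 [Ey0 e0_gt0 dense]]]]] := baire hE cover.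
have me0 : 0 < 2 * m%:R + e0 by rewrite ltr_wpDl ?mulr_ge0.
pose delta := e0 / (2 * m%:R + e0).
have delta_gt0 : 0 < delta by rewrite divr_gt0.
exists (maxn k0 k), delta; split => //; first exact: leq_maxr.
  by rewrite delta_gt0 ler_pdivrMr // mul1r lerDr mulr_ge0.
move=> r y r0 Ey small.
pose t := delta * r; have t0 : 0 < t by rewrite mulr_gt0.
pose y' := sscale (e0 / t)%:C y; have Ey' : E y' by exact: (fkZ hE).
have y'_small : sE k0 (ssub (sadd y0 y') y0) < e0.
  have -> : ssub (sadd y0 y') y0 = y' by seq_ring.
  rewrite (snZ hE) // cabs_real ger0_norm; last exact/ltW/divr_gt0.
  rewrite mulrAC ltr_pdivrMr // ltr_pM2l //.
  by apply: le_lt_trans small; apply: (sn_le hE (leq_maxl _ _)).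
have y0_small : sE k0 (ssub y0 y0) < e0 by rewrite (sn_subxx hE).
have := approxB (fkD hE Ey0 Ey') Ey0 (dense _ (fkD hE Ey0 Ey') y'_small)
  (dense _ Ey0 y0_small).
have -> : ssub (sadd y0 y') y0 = y' by seq_ring.
move=> /(approxZ (t / e0)%:C Ey').
have -> : sscale (t / e0)%:C y' = y.
  apply: funext => j; rewrite /sscale mulrA -rmorphM /= mulrA divfK ?gt_eqF //.
  by rewrite divff ?gt_eqF // mul1r.
move/approx_le; apply; rewrite cabs_real ger0_norm; last by rewrite divr_ge0 ?ltW.
have -> : t / e0 * (m%:R + m%:R) = r * (2 * m%:R / (2 * m%:R + e0)).
  by rewrite /t /delta; field; rewrite !gt_eqF.
by apply: ler_piMr; [exact: ltW | rewrite ler_pdivrMr // mul1r lerDl ltW].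
Qed.

Section Iteration.
Variables (K0 : nat -> nat) (delta : nat -> R).
Hypotheses (K0_ge : forall l, (l <= K0 l)%N) (delta_gt0 : forall l, 0 < delta l)
  (delta_le1 : forall l, delta l <= 1)
  (approxK0 : forall l r y, 0 < r -> E y -> sE (K0 l) y < delta l * r -> approx l r y).

(* Banach's successive approximation: the remainders [w n] ([w 0 = y]) shrink
   geometrically in E while the steps [w n - w n.+1] are geometrically small in
   F; both limits of [w] are 0, so [sF k y] is bounded by the sum of the steps. *)
Lemma sF_le_of_small_sE k r y : 0 < r -> E y -> sE (K0 k) y < delta k * r -> sF k y <= 2 * r.
Proof.
move=> r0 Ey small.
pose b n := r / 2 ^+ n.
have b_gt0 n : 0 < b n by rewrite divr_gt0 ?exprn_gt0.
have bS n : b n.+1 = b n / 2 by rewrite /b exprSr invfM mulrA.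
have b_small : forall eps, 0 < eps -> exists N, forall n, (N <= n)%N -> b n < eps :=
  halving_small r0.
pose Q n w := E w /\ sE (K0 (k + n)) w < delta (k + n) * b n.
pose P (n : nat) w w' := E (ssub w w') /\ sF (k + n) (ssub w w') <= b n.
have step n w : Q n w -> exists w', Q n.+1 w' /\ P n w w'.
  move=> [Ew w_small].
  have [z [Ez zb wz]] := approxK0 (b_gt0 n) Ew w_small (K0 (k + n.+1))
    (mulr_gt0 (delta_gt0 (k + n.+1)) (b_gt0 n.+1)).
  have wwz : ssub w (ssub w z) = z by seq_ring.
  exists (ssub w z); split; last by rewrite /P wwz.
  by split; [exact: (fkB hE) | ].
have Q0 : Q 0%N y by rewrite /Q addn0 /b expr0 divr1.
have [w [w0 hw]] := nat_dependent_choice Q0 step.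
have Ew n : E (w n) by case: (hw n) => -[].
have Fw n : F (w n) := EF (Ew n).
have K_mono : {homo addn k : m n / (m <= n)%N} by move=> m n; rewrite leq_add2l.
have K_unbounded l : exists n, (l <= k + n)%N by exists l; exact: leq_addl.
have e_ge0 n : 0 <= 2 * b n by rewrite mulr_ge0 ?ltW.
have e_small eps : 0 < eps -> exists n, 2 * b n < eps.
  move=> eps0; have [N hN] := b_small (eps / 2) (divr_gt0 eps0 (ltr0Sn _ 1)).
  by exists N; have := hN N (leqnn N); lra.
have w_step n : sF (k + n) (ssub (w n.+1) (w n)) <= 2 * b n - 2 * b n.+1.
  have [_ [_ wb]] := hw n; rewrite (sn_subC hF) // bS.
  by apply: le_trans wb _; lra.
have [x [Fx wx xw]] := telescoping_limit hF Fw K_mono K_unbounded e_ge0 e_small w_step.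
have w_to0 : converges sE w (szero R).
  move=> l eps eps0; have [N hN] := b_small eps eps0; exists (maxn N l) => n.
  rewrite geq_max => /andP[/hN bn ln].
  have -> : ssub (w n) (szero R) = w n by seq_ring.
  have [[_ wn] _] := hw n.
  apply: le_lt_trans (sn_le hE (leq_trans ln _) (Ew n)) _.
    exact: leq_trans (leq_addl k n) (K0_ge _).
  apply: lt_le_trans wn (le_trans _ (ltW bn)).
  by apply: ler_piMl; [exact: ltW | exact: delta_le1].
have x0 : x = szero R.
  exact: converges_unique hF hE Fx (fk0 hE) (fun n => conj (Fw n) (Ew n)) wx w_to0.
have := xw 0%N; rewrite x0 w0 addn0 (sn_subC hF _ (EF Ey) (fk0 hF)).
have -> : ssub y (szero R) = y by seq_ring.
by rewrite /b expr0 divr1.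
Qed.

End Iteration.

Lemma fk_inclusion_bounded k : exists k' (c : R), 0 <= c /\ forall y, E y -> sF k y <= c * sE k' y.
Proof.
have /choice [Kd hKd] l : exists Kd : nat * R, [/\ (l <= Kd.1)%N, 0 < Kd.2 <= 1 &
    forall r y, 0 < r -> E y -> sE Kd.1 y < Kd.2 * r -> approx l r y].
  by have [k0 [d [? ? ?]]] := approx_of_small_sE l; exists (k0, d).
pose K0 l := (Kd l).1; pose delta l := (Kd l).2.
have delta_gt0 l : 0 < delta l by case: (hKd l) => _ /andP[].
have delta_le1 l : delta l <= 1 by case: (hKd l) => _ /andP[].
have K0_ge l : (l <= K0 l)%N by case: (hKd l).
have approxK0 l : forall r y, 0 < r -> E y -> sE (K0 l) y < delta l * r -> approx l r y.
  by case: (hKd l).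
have bound := sF_le_of_small_sE K0_ge delta_gt0 delta_le1 approxK0.
exists (K0 k), (2 / delta k); split; first by rewrite divr_ge0 ?ltW.
move=> y Ey; apply/ler_addgt0Pr => eps eps0.
have d0 := delta_gt0 k; have s0 := sn_ge0 hE (K0 k) Ey.
pose r := (sE (K0 k) y + eps * delta k / 2) / delta k.
have half : 0 < eps * delta k / 2 by rewrite !mulr_gt0 ?invr_gt0.
have r0 : 0 < r := divr_gt0 (ltr_wpDl s0 half) d0.
have small : sE (K0 k) y < delta k * r by rewrite /r mulrC divfK ?gt_eqF // ltrDl.
have -> : 2 / delta k * sE (K0 k) y + eps = 2 * r by rewrite /r; field; rewrite gt_eqF.
exact: bound k r y r0 Ey small.
Qed.

End Inclusion.

(** * Hahn-Banach *)

Section RealHahnBanach.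
Variable R : realType.
Local Open Scope complex_scope.
Local Open Scope classical_set_scope.
Variables (X B : seqC R -> Prop) (p u : seqC R -> R).
Hypotheses (XD : forall x y, X x -> X y -> X (sadd x y))
  (XZ : forall a x, X x -> X (sscale a x))
  (pD : forall x y, X x -> X y -> p (sadd x y) <= p x + p y)
  (pZ : forall a x, X x -> p (sscale a x) = cabs a * p x)
  (BX : forall x, B x -> X x) (B0 : B (szero R))
  (BD : forall x y, B x -> B y -> B (sadd x y))
  (BZ : forall a x, B x -> B (sscale a x))
  (uD : forall x y, B x -> B y -> u (sadd x y) = u x + u y)
  (uZ : forall (r : R) x, B x -> u (sscale r%:C x) = r * u x)
  (up : forall x, B x -> u x <= p x).

Definition extension_graph (G : set (seqC R * R)) : Prop :=
  [/\ forall x t, G (x, t) -> X x,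
      forall x t t', G (x, t) -> G (x, t') -> t = t',
      forall x t y t', G (x, t) -> G (y, t') -> G (sadd x y, t + t'),
      forall (r : R) x t, G (x, t) -> G (sscale r%:C x, r * t) &
      (forall x t, G (x, t) -> t <= p x) /\ (forall x, B x -> G (x, u x))].

Lemma sscale0 (x : seqC R) : sscale 0 x = szero R.
Proof. by seq_ring. Qed.

Lemma pR (r : R) x : X x -> p (sscale r%:C x) = `|r| * p x.
Proof. by move=> Xx; rewrite pZ // cabs_real. Qed.

Lemma extension_graph_chain (F : set (set (seqC R * R))) :
  F `<=` (fun G => G = set0 \/ extension_graph G) -> total_on F subset ->
  (\bigcup_(G in F) G) = set0 \/ extension_graph (\bigcup_(G in F) G).
Proof.
move=> FP tot.
have ext G q : F G -> G q -> extension_graph G.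
  by move=> FG Gq; case: (FP G FG) => // G0; rewrite G0 in Gq.
have [[G0 [FG0 [q0 G0q]]]|empty] := pselect (exists G, F G /\ exists q, G q); last first.
  left; apply/seteqP; split => q // [G FG Gq].
  by exfalso; apply: empty; exists G; split => //; exists q.
have two q1 q2 : (\bigcup_(G in F) G) q1 -> (\bigcup_(G in F) G) q2 ->
    exists G, [/\ F G, extension_graph G, G q1 & G q2].
  move=> [G1 FG1 G1q] [G2 FG2 G2q].
  case: (tot _ _ FG1 FG2) => sub.
    by exists G2; split => //; [exact: ext FG2 G2q | exact: sub].
  by exists G1; split => //; [exact: ext FG1 G1q | exact: sub].
right; split.
- by move=> x t [G FG Gq]; have [GX _ _ _ _] := ext _ _ FG Gq; exact: GX Gq.
- by move=> x t t' h1 h2; have [G [_ [_ Gfun _ _ _] G1 G2]] := two _ _ h1 h2; exact: Gfun G1 G2.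
- move=> x t y t' h1 h2; have [G [FG [_ _ GD _ _] G1 G2]] := two _ _ h1 h2.
  by exists G => //; exact: GD G1 G2.
- move=> r x t [G FG Gq]; have [_ _ _ GZ _] := ext _ _ FG Gq.
  by exists G => //; exact: GZ Gq.
- split; first by move=> x t [G FG Gq]; have [_ _ _ _ [Gp _]] := ext _ _ FG Gq; exact: Gp Gq.
  by move=> x Bx; have [_ _ _ _ [_ GB]] := ext _ _ FG0 G0q; exists G0 => //; exact: GB.
Qed.

Section OneStep.
Variables (A : set (seqC R * R)) (x0 : seqC R).
Hypotheses (hA : extension_graph A) (Xx0 : X x0) (x0_out : forall t, ~ A (x0, t)).

Lemma extension_graph0 : A (szero R, 0).
Proof.
have [_ _ _ AZ [_ AB]] := hA.
by have := AZ 0 _ _ (AB _ B0); rewrite sscale0 mul0r.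
Qed.

Lemma extension_value : exists tau, forall d h, A (d, h) ->
  h - p (ssub d x0) <= tau /\ tau <= p (sadd d x0) - h.
Proof.
have [AX _ AD _ [Ap _]] := hA.
have key d h d' h' : A (d, h) -> A (d', h') -> h - p (ssub d x0) <= p (sadd d' x0) - h'.
  move=> Ad Ad'; have Xd := AX _ _ Ad; have Xd' := AX _ _ Ad'.
  have := Ap _ _ (AD _ _ _ _ Ad Ad').
  have -> : sadd d d' = sadd (ssub d x0) (sadd d' x0) by seq_ring.
  have := pD (XD Xd (XZ (-1) Xx0)) (XD Xd' Xx0); rewrite -ssubE; lra.
pose S := [set v | exists d h, A (d, h) /\ v = h - p (ssub d x0)].
have S0 : S !=set0.
  by exists (0 - p (ssub (szero R) x0)), (szero R), 0; split=> //; exact: extension_graph0.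
have S_ub : has_ubound S.
  by exists (p (sadd (szero R) x0) - 0) => v [d [h [Ad ->]]]; exact: key Ad extension_graph0.
exists (sup S) => d h Ad; split; first by apply: ub_le_sup => //; exists d, h.
by apply: ge_sup => // v [d' [h' [Ad' ->]]]; exact: key Ad' Ad.
Qed.

Definition extension (tau : R) : set (seqC R * R) :=
  [set z | exists d h (a : R), A (d, h) /\ z = (sadd d (sscale a%:C x0), h + a * tau)].

Variable tau : R.
Hypothesis tau_bound : forall d h, A (d, h) ->
  h - p (ssub d x0) <= tau /\ tau <= p (sadd d x0) - h.

Lemma extension_functional x t t' : extension tau (x, t) -> extension tau (x, t') -> t = t'.
Proof.
have [_ Afun AD AZ _] := hA.
move=> [d [h [a [Ad [ex ->]]]]] [d' [h' [a' [Ad' [ex' ->]]]]].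
have dd' i : d' i = d i + (a - a')%:C * x0 i.
  have := congr1 (fun f => f i) (etrans (esym ex) ex'); rewrite /sadd /sscale rmorphB /=.
  by move=> e; apply: (addIr (a'%:C * x0 i)); rewrite -e; ring.
have [aa'|aa'] := eqVneq a a'.
  have dd : d' = d by apply: funext => i; rewrite dd' aa' subrr mul0r addr0.
  by rewrite dd in Ad'; rewrite aa' (Afun _ _ _ Ad Ad').
exfalso; apply: (@x0_out ((a - a')^-1 * (h' - h))).
have -> : x0 = sscale ((a - a')^-1)%:C (sadd d' (sscale (-1)%:C d)).
  apply: funext => i; rewrite /sadd /sscale dd' rmorphN rmorph1 fmorphV /=.
  have aa'C : (a - a')%:C != 0 :> R[i] by rewrite (inj_eq (@complexI R)) subr_eq0.
  by rewrite (_ : _ + _ = (a - a')%:C * x0 i); [rewrite mulKf | ring].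
apply: (AZ); apply: (AD) => //; rewrite (_ : - h = -1 * h); [exact: AZ | by rewrite mulN1r].
Qed.

Lemma extension_dominated x t : extension tau (x, t) -> t <= p x.
Proof.
have [AX _ _ AZ [Ap _]] := hA.
move=> [d [h [a [Ad [-> ->]]]]]; have Xd := AX _ _ Ad.
have [a0|a0|->] := ltgtP a 0; last first.
- rewrite mul0r addr0 (_ : sadd d (sscale 0%:C x0) = d); first exact: Ap Ad.
  by seq_ring.
- have [_ +] := tau_bound (AZ (a^-1) _ _ Ad).
  have -> : sadd d (sscale a%:C x0) = sscale a%:C (sadd (sscale (a^-1)%:C d) x0).
    by apply: funext => i; rewrite /sadd /sscale mulrDr mulrA -rmorphM /= divff ?gt_eqF ?mul1r.
  rewrite pR; last by apply: XD => //; exact: XZ.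
  rewrite gtr0_norm // => h1.
  have : a * tau <= a * (p (sadd (sscale (a^-1)%:C d) x0) - a^-1 * h) by rewrite ler_pM2l.
  rewrite mulrBr mulrA divff ?gt_eqF // mul1r; lra.
- pose b := - a; have b0 : 0 < b by rewrite /b oppr_gt0.
  have [+ _] := tau_bound (AZ (b^-1) _ _ Ad).
  have -> : sadd d (sscale a%:C x0) = sscale b%:C (ssub (sscale (b^-1)%:C d) x0).
    apply: funext => i; rewrite /sadd /sscale /ssub mulrBr mulrA -rmorphM /= divff ?gt_eqF //.
    by rewrite /b rmorphN /=; ring.
  rewrite pR; last by rewrite ssubE; apply: XD; apply: XZ.
  rewrite gtr0_norm // => h1.
  have : b * (b^-1 * h - p (ssub (sscale (b^-1)%:C d) x0)) <= b * tau by rewrite ler_pM2l.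
  rewrite mulrBr mulrA divff ?gt_eqF // mul1r /b; lra.
Qed.

Lemma extension_graph_extension : extension_graph (extension tau).
Proof.
have [AX _ AD AZ [_ AB]] := hA.
split.
- by move=> x t [d [h [a [Ad [-> _]]]]]; apply: XD; [exact: AX Ad | exact: XZ].
- exact: extension_functional.
- move=> x t y t' [d [h [a [Ad [-> ->]]]]] [d' [h' [a' [Ad' [-> ->]]]]].
  exists (sadd d d'), (h + h'), (a + a'); split; first exact: AD.
  by congr pair; [apply: funext => i; rewrite /sadd /sscale rmorphD /= | ]; ring.
- move=> r x t [d [h [a [Ad [-> ->]]]]].
  exists (sscale r%:C d), (r * h), (r * a); split; first exact: AZ.
  by congr pair; [apply: funext => i; rewrite /sadd /sscale rmorphM /= | ]; ring.
- split; first exact: extension_dominated.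
  move=> x Bx; exists x, (u x), 0; split; first exact: AB.
  by congr pair; [seq_ring | ring].
Qed.

Lemma extension_proper : A `<` extension tau.
Proof.
split.
  move=> [x t] Axt; exists x, t, 0; split => //.
  by congr pair; [seq_ring | ring].
move=> /(_ (x0, tau)) sub; apply: (@x0_out tau); apply: sub.
exists (szero R), 0, 1; split; first exact: extension_graph0.
by congr pair; [seq_ring | ring].
Qed.

End OneStep.

Lemma real_hahn_banach : exists U : seqC R -> R,
  [/\ forall x y, X x -> X y -> U (sadd x y) = U x + U y,
      forall (r : R) x, X x -> U (sscale r%:C x) = r * U x,
      forall x, X x -> U x <= p x &
      forall x, B x -> U x = u x].
Proof.
have [A [PA maxA]] := Zorn_bigcup extension_graph_chain.
pose G0 : set (seqC R * R) := [set z | B z.1 /\ z.2 = u z.1].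
have G0_graph : extension_graph G0.
  split.
  - by move=> x t [/BX].
  - by move=> x t t' [_ /= ->] [_ /= ->].
  - by move=> x t y t' [/= Bx ->] [/= By ->]; split => /=; [exact: BD | exact/esym/uD].
  - by move=> r x t [/= Bx ->]; split => /=; [exact: BZ | exact/esym/uZ].
  - by split=> [x t [/= Bx ->]|x Bx]; [exact: up | split].
have hA : extension_graph A.
  case: PA => // A0; exfalso; apply: (maxA G0); last by right.
  by rewrite A0; split => // /(_ (szero R, u (szero R))); apply.
have [AX Afun AD AZ [Ap AB]] := hA.
have total x : X x -> exists t, A (x, t).
  move=> Xx; apply: contrapT => out.
  have x_out t : ~ A (x, t) by move=> Axt; apply: out; exists t.
  have [tau tau_bound] := extension_value hA Xx.
  apply: (maxA _ (extension_proper hA x_out tau)); right.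
  exact: extension_graph_extension.
have /choice [U UA] x : exists t, X x -> A (x, t).
  have [/total [t At]|nX] := pselect (X x); last by exists 0.
  by exists t.
exists U; split.
- by move=> x y Xx Xy; apply: Afun (UA _ (XD Xx Xy)) (AD _ _ _ _ (UA _ Xx) (UA _ Xy)).
- by move=> r x Xx; apply: Afun (UA _ (XZ _ Xx)) (AZ _ _ _ (UA _ Xx)).
- by move=> x Xx; apply: Ap (UA _ Xx).
- by move=> x Bx; apply: Afun (UA _ (BX Bx)) (AB _ Bx).
Qed.

End RealHahnBanach.

Section ComplexHahnBanach.
Variable R : realType.
Local Notation C := R[i].
Local Open Scope complex_scope.
Variables (X B : seqC R -> Prop) (p : seqC R -> R).
Hypotheses (XD : forall x y, X x -> X y -> X (sadd x y))
  (XZ : forall a x, X x -> X (sscale a x)).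

Definition complexify (U : seqC R -> R) (x : seqC R) : C := Complex (U x) (- U (sscale 'i x)).

Lemma complexify_linear (U : seqC R -> R) :
  (forall x y, X x -> X y -> U (sadd x y) = U x + U y) ->
  (forall (r : R) x, X x -> U (sscale r%:C x) = r * U x) ->
  (forall x y, X x -> X y -> complexify U (sadd x y) = complexify U x + complexify U y) /\
  (forall a x, X x -> complexify U (sscale a x) = a * complexify U x).
Proof.
move=> UD UZ; have iD x y : sscale 'i (sadd x y) = sadd (sscale 'i x) (sscale 'i y).
  by seq_ring.
split=> [x y Xx Xy|[a1 a2] x Xx].
  rewrite /complexify iD !UD //; try exact: XZ.
  by apply/eqP; rewrite eq_complex /= opprD !eqxx.
have e1 : sscale (Complex a1 a2) x = sadd (sscale a1%:C x) (sscale a2%:C (sscale 'i x)).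
  apply: funext => j; rewrite /sscale /sadd mulrA -mulrDl; congr (_ * _).
  by apply/eqP; rewrite eq_complex /=; apply/andP; split; apply/eqP; ring.
have e2 : sscale 'i (sscale (Complex a1 a2) x) =
    sadd (sscale (- a2)%:C x) (sscale a1%:C (sscale 'i x)).
  apply: funext => j; rewrite /sscale /sadd !mulrA -mulrDl; congr (_ * _).
  by apply/eqP; rewrite eq_complex /=; apply/andP; split; apply/eqP; ring.
rewrite /complexify e2 e1 !UD ?UZ //; try by [apply: XZ | do 2 apply: XZ].
by apply/eqP; rewrite eq_complex /=; apply/andP; split; apply/eqP; ring.
Qed.

Hypotheses (p0 : forall x, X x -> 0 <= p x)
  (pD : forall x y, X x -> X y -> p (sadd x y) <= p x + p y)
  (pZ : forall a x, X x -> p (sscale a x) = cabs a * p x)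
  (BX : forall x, B x -> X x) (B0 : B (szero R))
  (BD : forall x y, B x -> B y -> B (sadd x y))
  (BZ : forall a x, B x -> B (sscale a x)).

Lemma complex_hahn_banach (g : seqC R -> C) :
  (forall x y, B x -> B y -> g (sadd x y) = g x + g y) ->
  (forall a x, B x -> g (sscale a x) = a * g x) ->
  (forall x, B x -> cabs (g x) <= p x) ->
  exists f : seqC R -> C,
  [/\ forall x y, X x -> X y -> f (sadd x y) = f x + f y,
      forall a x, X x -> f (sscale a x) = a * f x,
      forall x, X x -> cabs (f x) <= p x &
      forall x, B x -> f x = g x].
Proof.
move=> gD gZ gp.
pose u x := complex.Re (g x).
have uD x y : B x -> B y -> u (sadd x y) = u x + u y.
  by move=> Bx By; rewrite /u gD //; case: (g x); case: (g y).
have uZ (r : R) x : B x -> u (sscale r%:C x) = r * u x.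
  by move=> Bx; rewrite /u gZ //; case: (g x) => ? ? /=; rewrite mul0r subr0.
have up x : B x -> u x <= p x by move=> Bx; exact: le_trans (Re_le_cabs _) (gp _ Bx).
have [U [UD UZ Up UB]] := real_hahn_banach XD XZ pD pZ BX B0 BD BZ uD uZ up.
have [fD fZ] := complexify_linear UD UZ.
exists (complexify U); split => //.
- move=> x Xx; set w := complexify U x.
  have := Up _ (XZ w^* Xx); rewrite -[U _]/(complex.Re (complexify U (sscale w^* x))).
  rewrite fZ // mulrC mulc_conj pZ // cabs_conj /= expr2.
  have [->|w0] := eqVneq (cabs w) 0; first by rewrite p0.
  by rewrite ler_pM2l // lt_def w0 cabs_ge0.
- move=> x Bx; rewrite /complexify UB // UB; last exact: BZ.
  by rewrite /u gZ //; case: (g x) => ? ? /=; rewrite mul0r mul1r sub0r opprK.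
Qed.

End ComplexHahnBanach.

(** * Duals *)

Section Closure.
Variable R : realType.
Variables (X A : seqC R -> Prop) (sn : nat -> seqC R -> R).
Hypotheses (hX : fk_space X sn) (AX : forall x, A x -> X x) (A0 : A (szero R))
  (AD : forall x y, A x -> A y -> A (sadd x y))
  (AZ : forall a x, A x -> A (sscale a x)).

Definition closure_in (x : seqC R) : Prop :=
  X x /\ forall k (e : R), 0 < e -> exists y, A y /\ sn k (ssub x y) < e.

Lemma closure_in_fk_space : fk_space closure_in sn.
Proof.
have Xcl x : closure_in x -> X x by case.
split.
- split; first exact: (fk0 hX).
  move=> k e e0; exists (szero R); split => //.
  by rewrite (sn_subxx hX) //; exact: (fk0 hX).
- move=> x y [Xx hx] [Xy hy]; split; first exact: (fkD hX).
  move=> k e e0; have e2 : 0 < e / 2 by rewrite divr_gt0.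
  have [x1 [Ax1 h1]] := hx k _ e2; have [y1 [Ay1 h2]] := hy k _ e2.
  exists (sadd x1 y1); split; first exact: AD.
  have -> : ssub (sadd x y) (sadd x1 y1) = sadd (ssub x x1) (ssub y y1) by seq_ring.
  by have := snD hX k (fkB hX Xx (AX Ax1)) (fkB hX Xy (AX Ay1)); lra.
- move=> a x [Xx hx]; split; first exact: (fkZ hX).
  move=> k e e0; have a0 := cabs_ge0 a; have a1 : 0 < cabs a + 1 by rewrite ltr_wpDl.
  have [x1 [Ax1 h1]] := hx k _ (divr_gt0 e0 a1).
  exists (sscale a x1); split; first exact: AZ.
  have -> : ssub (sscale a x) (sscale a x1) = sscale a (ssub x x1) by seq_ring.
  rewrite (snZ hX); last exact: (fkB hX Xx (AX Ax1)).
  apply: le_lt_trans (_ : _ <= cabs a * (e / (cabs a + 1))) _; first exact/ler_wpM2l/ltW.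
  by rewrite mulrA ltr_pdivrMr // mulrDr mulr1 mulrC ltrDl.
- by move=> k x /Xcl; exact: (sn_ge0 hX).
- by move=> k x y /Xcl Xx /Xcl; exact: (snD hX).
- by move=> k a x /Xcl; exact: (snZ hX).
- by move=> k x /Xcl; exact: (sn_leS hX).
- move=> u clu u_cauchy; have [x [Xx ux]] := fk_complete hX (fun n => Xcl _ (clu n)) u_cauchy.
  exists x; split => //; split => // k e e0; have e2 : 0 < e / 2 by rewrite divr_gt0.
  have [N hN] := ux k _ e2; have [_ clN] := clu N; have [y [Ay uy]] := clN k _ e2.
  exists y; split => //.
  have := sn_sub_trans hX k Xx (Xcl _ (clu N)) (AX Ay).
  by rewrite (sn_subC hX k (Xcl _ (clu N)) Xx); have := hN N (leqnn N); lra.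
- move=> j; have [k [c [c0 hc]]] := fk_coord hX j.
  by exists k, c; split => // x /Xcl; exact: hc.
Qed.

End Closure.

Section Phi.
Variable R : realType.
Implicit Types x y : seqC R.

Lemma in_phi0 : in_phi (szero R).
Proof. by exists 0%N. Qed.

Lemma in_phiD x y : in_phi x -> in_phi y -> in_phi (sadd x y).
Proof.
move=> [N1 h1] [N2 h2]; exists (maxn N1 N2) => j; rewrite geq_max => /andP[j1 j2].
by rewrite /sadd h1 ?h2 ?addr0.
Qed.

Lemma in_phiZ a x : in_phi x -> in_phi (sscale a x).
Proof. by move=> [N h]; exists N => j /h; rewrite /sscale => ->; rewrite mulr0. Qed.

Lemma in_phi_delta j : in_phi (delta R j).
Proof. by exists j.+1 => i ji; rewrite /delta gtn_eqF. Qed.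

Lemma phi_sub X sn : fk_space X sn -> (forall j, X (delta R j)) -> forall x, in_phi x -> X x.
Proof.
move=> hX Xdelta x [N xN].
pose trunc n : seqC R := fun i => if (i < n)%N then x i else 0.
have Xtrunc n : X (trunc n).
  elim: n => [|n ih].
    by rewrite (_ : trunc 0%N = szero R); [exact: (fk0 hX) | apply: funext].
  rewrite (_ : trunc n.+1 = sadd (trunc n) (sscale (x n) (delta R n))).
    by apply: (fkD hX) => //; apply: (fkZ hX).
  apply: funext => i; rewrite /trunc /sadd /sscale /delta ltnS leq_eqVlt.
  by have [->|_] := eqVneq i n; rewrite ?ltnn ?mulr1 ?add0r ?mulr0 ?addr0.
rewrite (_ : x = trunc N) //; apply: funext => i; rewrite /trunc.
by case: ltnP => // /xN ->.
Qed.

Lemma phi_closure_delta (X : seqC R -> Prop) sX j :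
  fk_space X sX -> X (delta R j) -> phi_closure X sX (delta R j).
Proof.
move=> hX Xj; split => // k e e0; exists (delta R j); split; first exact: in_phi_delta.
by rewrite (sn_subxx hX).
Qed.

End Phi.

Section Duals.
Variable R : realType.

Lemma in_dual_sub (E F : seqC R -> Prop) sE sF : fk_space E sE -> fk_space F sF ->
  (forall x, E x -> F x) -> forall f, in_dual F sF f -> in_dual E sE f.
Proof.
move=> hE hF EF f [fD fZ [k [c hf]]]; split.
- by move=> x y /EF Fx /EF; exact: fD.
- by move=> a x /EF; exact: fZ.
have [k' [c' [c'0 hc']]] := fk_inclusion_bounded hE hF EF k.
exists k', (`|c| * c') => y Ey; apply: le_trans (hf y (EF _ Ey)) _.
apply: le_trans (_ : _ <= `|c| * sF k y) _.
  by apply: ler_wpM2r; [exact: (sn_ge0 hF) (EF _ Ey) | exact: ler_norm].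
by rewrite -mulrA; apply: ler_wpM2l => //; exact: hc'.
Qed.

Lemma in_dual_extend (X Y : seqC R -> Prop) sX sY : fk_space X sX -> fk_space Y sY ->
  (forall j, X (delta R j)) -> (forall x, phi_closure X sX x -> Y x) ->
  forall g, in_dual Y sY g ->
  exists f, in_dual X sX f /\ forall x, phi_closure X sX x -> f x = g x.
Proof.
move=> hX hY Xdelta clY g [gD gZ [k [c hg]]].
(* [phi_closure X sX] is [closure_in X in_phi sX]. *)
have hcl : fk_space (phi_closure X sX) sX :=
  closure_in_fk_space hX (phi_sub hX Xdelta) (in_phi0 R) (@in_phiD R) (@in_phiZ R).
have [k' [c' [c'0 hc']]] := fk_inclusion_bounded hcl hY clY k.
pose pX y := `|c| * c' * sX k' y.
have pX0 y : X y -> 0 <= pX y by move=> Xy; rewrite !mulr_ge0 ?(sn_ge0 hX).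
have pXD y z : X y -> X z -> pX (sadd y z) <= pX y + pX z.
  by move=> Xy Xz; rewrite /pX -mulrDr; apply: ler_wpM2l; [exact: mulr_ge0 | exact: (snD hX)].
have pXZ a y : X y -> pX (sscale a y) = cabs a * pX y.
  by move=> Xy; rewrite /pX (snZ hX) // mulrCA.
have gp y : phi_closure X sX y -> cabs (g y) <= pX y.
  move=> cly; apply: le_trans (hg y (clY _ cly)) _.
  apply: le_trans (_ : _ <= `|c| * sY k y) _.
    by apply: ler_wpM2r; [exact: (sn_ge0 hY) (clY _ cly) | exact: ler_norm].
  by rewrite /pX -mulrA; apply: ler_wpM2l => //; exact: hc'.
have clX y : phi_closure X sX y -> X y by case.
have [f [fD fZ fp fg]] := complex_hahn_banach (fkD hX) (fkZ hX) pX0 pXD pXZ clX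
  (fk0 hcl) (fkD hcl) (fkZ hcl) (fun y z cly clz => gD _ _ (clY _ cly) (clY _ clz))
  (fun a y cly => gZ a _ (clY _ cly)) gp.
by exists f; split => //; split => //; exists k', (`|c| * c').
Qed.

Lemma DqpBplus_sub (X Y : seqC R -> Prop) sX sY p q :
  (forall f, in_dual X sX f ->
     exists g, in_dual Y sY g /\ forall j, g (delta R j) = f (delta R j)) ->
  forall x, DqpBplus Y sY p q x -> DqpBplus X sX p q x.
Proof.
move=> dualXY x xY f /dualXY [g [gY gf]]; have [M hM] := xY g gY.
by exists M => n; under eq_bigr => k _ do under eq_bigr => j _ do rewrite -gf.
Qed.

End Duals.

Theorem mainTheorem9 (R : realType) (p q : nat -> nat)
  (hpq : forall n, (p n < q n)%N)
  (hq : forall M, exists N, forall n, (N <= n)%N -> (M <= q n)%N)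
  (X : seqC R -> Prop) (snX : nat -> seqC R -> R)
  (hX : is_FK X snX) (hphiX : forall j, X (delta R j))
  (Y : seqC R -> Prop) (snY : nat -> seqC R -> R)
  (hY : is_FK Y snY)
  (hclY : forall x, phi_closure X snX x -> Y x)
  (hYX : forall x, Y x -> X x) :
  DqpBplus Y snY p q = DqpBplus X snX p q.
Proof.
have hXs := is_FK_fk_space hX; have hYs := is_FK_fk_space hY.
apply: funext => x; apply: propext; split; apply: DqpBplus_sub => f hf.
- by exists f; split => //; exact: in_dual_sub hYs hXs hYX f hf.
- have [g [gX gf]] := in_dual_extend hXs hYs hphiX hclY hf.
  by exists g; split => // j; apply: gf; exact: phi_closure_delta.
Qed.
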